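(* Let $\alpha\in(0,1]$ and $\lambda\in\mathbb{C}$ with $\operatorname{Re}\lambda>-1$ and $\lambda\notin\{0,1\}$. Then there is no nontrivial $\psi\in C^\infty[0,1]$ solving \[ z(1-z)\psi''(z)+\big(\lambda-\sqrt{1-\alpha}-2\lambda z\big)\psi'(z)-\lambda(\lambda-1)\psi(z)=0 . \] In particular, $U_{\alpha,\infty,\kappa}$ is mode-stable: every $\lambda\in\mathbb{C}$ for which there exists $0\ne\phi\in C^\infty[-1,1]$ with \[ \Big(\lambda^2+\lambda-\frac{2\alpha\lambda}{1+\sqrt{1-\alpha}\,y}\Big)\phi+\Big(2\lambda+2-\frac{2\alpha}{1+\sqrt{1-\alpha}\,y}\Big)y\,\phi'+(y^2-1)\phi''=0 \] satisfies either $\operatorname{Re}\lambda<0$ or $\lambda\in\{0,1\}$.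
   Context: The hypergeometric ODE is obtained from $(y^2-1)\phi''+(2\lambda y+2\sqrt{1-\alpha})\phi'+(\lambda^2-\lambda)\phi=0$ on $[-1,1]$ via $y=2z-1$, $\phi(y)=\psi(z)$. $U_{\alpha,\infty,\kappa}(s,y)=\alpha s-\alpha\ln(1+\sqrt{1-\alpha}y)+\kappa$; its linearised operator's eigenvalues are the $\lambda$ for which the second displayed ODE has a nonzero smooth solution on $[-1,1]$, and mode-stability means each such eigenvalue has negative real part or equals $0$ or $1$. *)

From Stdlib Require Export Reals.
From Coquelicot Require Export Coquelicot.

Definition has_deriv_on (a b : R) (f g : R -> C) : Prop :=
  forall x : R, (a <= x <= b)%R ->
    filterdiff f (within (fun t : R => (a <= t <= b)%R) (locally x))
      (fun h : R => scal h (g x)).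

Definition smooth_on (a b : R) (f : R -> C) : Prop :=
  exists D : nat -> R -> C,
    D O = f /\ forall n : nat, has_deriv_on a b (D n) (D (S n)).

(* Differentiating the hypergeometric equation k times shows that psi^(k) solves
   the same equation with lam replaced by lam + k.  Once
   Re (lam + k) >= (Im lam)^2 + 3, the energy z (1 - z) |psi^(k)|^2, which vanishes
   at both ends of (0, 1), cannot have a positive interior maximum, so psi^(k) = 0.
   Going back down, the equation with two vanishing higher derivatives reads
   (lam + j) (lam + j - 1) psi^(j) = 0, and lam + j is neither 0 nor 1 because
   Re lam > -1 and lam is neither 0 nor 1. *)

From Stdlib Require Import Reals Lra Psatz.
From Coquelicot Require Import Coquelicot.
Open Scope R_scope.

(** * Complex-valued derivatives *)

(* Coquelicot's product rule only covers scalar-valued functions, so derivatives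
   of complex-valued functions are taken componentwise. *)
Definition is_derive_C (f : R -> C) (x : R) (l : C) : Prop :=
  is_derive (fun t => Re (f t)) x (Re l) /\ is_derive (fun t => Im (f t)) x (Im l).

Lemma locally_open_interval (a b x : R) : a < x < b -> locally x (fun t => a < t < b).
Proof. intros Hx; apply (locally_interval _ x a b); simpl; tauto. Qed.

Lemma is_derive_C_ext_loc (a b : R) (f g : R -> C) (x : R) (l : C) :
  (forall t, a < t < b -> f t = g t) -> a < x < b ->
  is_derive_C f x l -> is_derive_C g x l.
Proof.
  intros Efg Hx [Hre Him].
  assert (Hloc : locally x (fun t => f t = g t)).
  { apply filter_imp with (2 := locally_open_interval a b x Hx); auto. }
  split; [apply (is_derive_ext_loc (fun t => Re (f t))) | apply (is_derive_ext_loc (fun t => Im (f t)))];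
    auto; apply filter_imp with (2 := Hloc); intros t ->; reflexivity.
Qed.

Lemma is_derive_C_unique (a b : R) (f g : R -> C) (x : R) (l1 l2 : C) :
  (forall t, a < t < b -> f t = g t) -> a < x < b ->
  is_derive_C f x l1 -> is_derive_C g x l2 -> l1 = l2.
Proof.
  intros Efg Hx Hf [Hre2 Him2].
  destruct (is_derive_C_ext_loc a b f g x l1 Efg Hx Hf) as [Hre1 Him1].
  apply is_derive_unique in Hre1, Hre2, Him1, Him2.
  apply injective_projections; [change (Re l1 = Re l2) | change (Im l1 = Im l2)]; congruence.
Qed.

Lemma is_derive_C_const (c : C) (x : R) : is_derive_C (fun _ => c) x 0.
Proof. split; exact (is_derive_const _ x). Qed.

Lemma is_derive_C_RtoC (r : R -> R) (x dr : R) :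
  is_derive r x dr -> is_derive_C (fun t => RtoC (r t)) x (RtoC dr).
Proof. intros Hr; split; [exact Hr | exact (is_derive_const 0 x)]. Qed.

Lemma is_derive_C_plus (f g : R -> C) (x : R) (lf lg : C) :
  is_derive_C f x lf -> is_derive_C g x lg -> is_derive_C (fun t => f t + g t)%C x (lf + lg)%C.
Proof.
  intros [Hf1 Hf2] [Hg1 Hg2].
  split; [exact (is_derive_plus _ _ x _ _ Hf1 Hg1) | exact (is_derive_plus _ _ x _ _ Hf2 Hg2)].
Qed.

Lemma is_derive_C_minus (f g : R -> C) (x : R) (lf lg : C) :
  is_derive_C f x lf -> is_derive_C g x lg -> is_derive_C (fun t => f t - g t)%C x (lf - lg)%C.
Proof.
  intros [Hf1 Hf2] [Hg1 Hg2].
  split; [exact (is_derive_minus _ _ x _ _ Hf1 Hg1) | exact (is_derive_minus _ _ x _ _ Hf2 Hg2)].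
Qed.

Lemma is_derive_C_mult (f g : R -> C) (x : R) (lf lg : C) :
  is_derive_C f x lf -> is_derive_C g x lg ->
  is_derive_C (fun t => f t * g t)%C x (lf * g x + f x * lg)%C.
Proof.
  intros [Hf1 Hf2] [Hg1 Hg2].
  pose proof (fun u v du dv Hu Hv => is_derive_mult u v x du dv Hu Hv Rmult_comm) as Hmult.
  split.
  - replace (Re (lf * g x + f x * lg)%C)
      with (Re lf * Re (g x) + Re (f x) * Re lg - (Im lf * Im (g x) + Im (f x) * Im lg))
      by (simpl; unfold Re, Im; ring).
    exact (is_derive_minus _ _ x _ _ (Hmult _ _ _ _ Hf1 Hg1) (Hmult _ _ _ _ Hf2 Hg2)).
  - replace (Im (lf * g x + f x * lg)%C)
      with (Re lf * Im (g x) + Re (f x) * Im lg + (Im lf * Re (g x) + Im (f x) * Re lg))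
      by (simpl; unfold Re, Im; ring).
    exact (is_derive_plus _ _ x _ _ (Hmult _ _ _ _ Hf1 Hg2) (Hmult _ _ _ _ Hf2 Hg1)).
Qed.

Lemma is_derive_C_comp (f : R -> C) (h : R -> R) (x dh : R) (l : C) :
  is_derive_C f (h x) l -> is_derive h x dh ->
  is_derive_C (fun t => f (h t)) x (RtoC dh * l)%C.
Proof.
  intros [Hre Him] Hh.
  split.
  - replace (Re (RtoC dh * l)%C) with (dh * Re l) by (simpl; unfold Re, Im; ring).
    exact (is_derive_comp _ h x _ _ Hre Hh).
  - replace (Im (RtoC dh * l)%C) with (dh * Im l) by (simpl; unfold Re, Im; ring).
    exact (is_derive_comp _ h x _ _ Him Hh).
Qed.

Lemma is_derive_is_derive_C (f : R -> C) (x : R) (l : C) :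
  is_derive f x l -> is_derive_C f x l.
Proof.
  intros Hf. split.
  - eapply filterdiff_ext_lin; [| reflexivity].
    exact (filterdiff_comp f fst _ fst Hf
             (filterdiff_linear _ (is_linear_fst (U := R_NormedModule) (V := R_NormedModule)))).
  - eapply filterdiff_ext_lin; [| reflexivity].
    exact (filterdiff_comp f snd _ snd Hf
             (filterdiff_linear _ (is_linear_snd (U := R_NormedModule) (V := R_NormedModule)))).
Qed.

Lemma has_deriv_on_is_derive_C (a b : R) (f g : R -> C) (x : R) :
  has_deriv_on a b f g -> a < x < b -> is_derive_C f x (g x).
Proof.
  intros Hd Hx. apply is_derive_is_derive_C.
  destruct (Hd x ltac:(lra)) as [Hlin Hdom].
  split; [exact Hlin |].
  intros x' Hx'. rewrite <- (is_filter_lim_locally_unique x x' Hx').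
  assert (Hlim : is_filter_lim (within (fun t => a <= t <= b) (locally x)) x).
  { intros P HP. apply filter_imp with (2 := HP); auto. }
  assert (Hnear : locally x (fun t => a <= t <= b)).
  { apply filter_imp with (2 := locally_open_interval a b x Hx); intros; lra. }
  intros eps. specialize (Hdom x Hlim eps); unfold within in Hdom.
  generalize (filter_and _ _ Hdom Hnear).
  apply filter_imp; intros y [Hy Hab]; auto.
Qed.

Definition continuous_on_Icc (a b : R) (F : R -> R) : Prop :=
  forall x, a <= x <= b -> forall eps, 0 < eps -> exists del, 0 < del /\
    forall y, a <= y <= b -> Rabs (y - x) < del -> Rabs (F y - F x) < eps.

Lemma has_deriv_on_continuous (a b : R) (f g : R -> C) :
  has_deriv_on a b f g ->
  continuous_on_Icc a b (fun t => Re (f t)) /\ continuous_on_Icc a b (fun t => Im (f t)).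
Proof.
  intros Hd.
  assert (Hc : forall x, a <= x <= b -> forall eps, 0 < eps -> exists del, 0 < del /\
    forall y, a <= y <= b -> Rabs (y - x) < del ->
      Rabs (Re (f y) - Re (f x)) < eps /\ Rabs (Im (f y) - Im (f x)) < eps).
  { intros x Hx eps Heps.
    assert (Hlim : is_filter_lim (within (fun t => a <= t <= b) (locally x)) x).
    { intros P HP. apply filter_imp with (2 := HP); auto. }
    assert (Hex : ex_filterdiff f (within (fun t => a <= t <= b) (locally x)))
      by (eexists; exact (Hd x Hx)).
    pose proof (filterdiff_continuous_aux f Hex x Hlim) as Hcont.
    apply filterlim_locally with (eps := mkposreal eps Heps) in Hcont.
    destruct Hcont as [del Hdel].
    exists del; split; [apply cond_pos |].
    intros y Hy Hyx. exact (Hdel y Hyx Hy). }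
  split; intros x Hx eps Heps; destruct (Hc x Hx eps Heps) as [del [Hdel Hy]];
    exists del; split; auto; intros y Hy' Hyx; apply (Hy y Hy' Hyx).
Qed.

Lemma continuous_on_Icc_bounded (a b : R) (F : R -> R) :
  a <= b -> continuous_on_Icc a b F -> exists M, forall x, a <= x <= b -> Rabs (F x) <= M.
Proof.
  intros Hab Hc.
  (* Clamping to [a, b] turns continuity within [a, b] into the two-sided
     continuity required by continuity_ab_maj. *)
  set (clamp := fun x => Rmax a (Rmin b x)).
  assert (Hin : forall x, a <= clamp x <= b)
    by (intros; unfold clamp, Rmax, Rmin; repeat destruct Rle_dec; lra).
  assert (Hid : forall x, a <= x <= b -> clamp x = x)
    by (intros; unfold clamp, Rmax, Rmin; repeat destruct Rle_dec; lra).
  assert (Hlip : forall x y, Rabs (clamp y - clamp x) <= Rabs (y - x))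
    by (intros; unfold clamp, Rmax, Rmin, Rabs; repeat destruct Rle_dec;
        repeat destruct Rcase_abs; lra).
  set (G := fun x => Rabs (F (clamp x))).
  assert (HG : forall c, a <= c <= b -> continuity_pt G c).
  { intros c Hcab. apply continuity_pt_locally. intros eps.
    destruct (Hc c Hcab eps (cond_pos eps)) as [del [Hdel Hy]].
    exists (mkposreal del Hdel). intros y Hyc. change (Rabs (y - c) < del) in Hyc.
    unfold G. rewrite (Hid c Hcab).
    eapply Rle_lt_trans; [apply Rabs_triang_inv2 |].
    apply Hy; [apply Hin |].
    specialize (Hlip c y). rewrite (Hid c Hcab) in Hlip. lra. }
  destruct (continuity_ab_maj G a b Hab HG) as [c [Hmax _]].
  exists (G c). intros x Hx. specialize (Hmax x Hx). unfold G in Hmax.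
  rewrite (Hid x Hx) in Hmax. exact Hmax.
Qed.

Lemma continuous_on_Icc_eq0 (a b : R) (F : R -> R) :
  a < b -> continuous_on_Icc a b F -> (forall t, a < t < b -> F t = 0) ->
  forall x, a <= x <= b -> F x = 0.
Proof.
  intros Hab Hc Hz x Hx.
  destruct (Req_dec (F x) 0) as [| Hnz]; [assumption | exfalso].
  destruct (Hc x Hx (Rabs (F x)) (Rabs_pos_lt _ Hnz)) as [del [Hdel Hy]].
  set (th := Rmin 1 (del / (b - a))).
  assert (Hth : 0 < th <= 1).
  { split; [apply Rmin_glb_lt; [lra | apply Rdiv_lt_0_compat; lra] | apply Rmin_l]. }
  assert (Hthdel : th * (b - a) <= del).
  { apply (Rle_trans _ (del / (b - a) * (b - a))); [apply Rmult_le_compat_r; [lra | apply Rmin_r] |].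
    right; field; lra. }
  set (y := x + th * ((a + b) / 2 - x)).
  assert (Hyab : a < y < b) by (unfold y; split; nra).
  assert (Hyx : Rabs (y - x) < del).
  { unfold y. replace (x + th * ((a + b) / 2 - x) - x) with (th * ((a + b) / 2 - x)) by ring.
    rewrite Rabs_mult, Rabs_pos_eq by lra.
    unfold Rabs; destruct Rcase_abs; nra. }
  specialize (Hy y ltac:(lra) Hyx).
  rewrite (Hz y Hyab), Rminus_0_l, Rabs_Ropp in Hy. lra.
Qed.

Lemma has_deriv_on_eq0 (a b : R) (f g : R -> C) :
  a < b -> has_deriv_on a b f g -> (forall t, a < t < b -> f t = 0) ->
  forall x, a <= x <= b -> f x = 0.
Proof.
  intros Hab Hd Hz x Hx. destruct (has_deriv_on_continuous a b f g Hd) as [Hre Him].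
  apply injective_projections.
  - apply (continuous_on_Icc_eq0 a b (fun t => Re (f t)) Hab Hre); auto.
    intros t Ht. rewrite (Hz t Ht). reflexivity.
  - apply (continuous_on_Icc_eq0 a b (fun t => Im (f t)) Hab Him); auto.
    intros t Ht. rewrite (Hz t Ht). reflexivity.
Qed.

(** * Bounded derivatives on an open interval *)

Definition bounded_on (a b : R) (f : R -> C) : Prop :=
  exists M, forall x, a < x < b -> Cmod (f x) <= M.

Lemma bounded_on_const (a b : R) (c : C) : bounded_on a b (fun _ => c).
Proof. exists (Cmod c). intros; apply Rle_refl. Qed.

Lemma bounded_on_plus (a b : R) (f g : R -> C) :
  bounded_on a b f -> bounded_on a b g -> bounded_on a b (fun t => f t + g t)%C.
Proof.
  intros [Mf Hf] [Mg Hg]. exists (Mf + Mg). intros x Hx.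
  eapply Rle_trans; [apply Cmod_triangle | apply Rplus_le_compat; auto].
Qed.

Lemma bounded_on_mult (a b : R) (f g : R -> C) :
  bounded_on a b f -> bounded_on a b g -> bounded_on a b (fun t => f t * g t)%C.
Proof.
  intros [Mf Hf] [Mg Hg]. exists (Mf * Mg). intros x Hx. rewrite Cmod_mult.
  apply Rmult_le_compat; auto using Cmod_ge_0.
Qed.

Lemma has_deriv_on_bounded (a b : R) (f g : R -> C) :
  a <= b -> has_deriv_on a b f g -> bounded_on a b f.
Proof.
  intros Hab Hd. destruct (has_deriv_on_continuous a b f g Hd) as [Hre Him].
  destruct (continuous_on_Icc_bounded a b _ Hab Hre) as [M1 HM1].
  destruct (continuous_on_Icc_bounded a b _ Hab Him) as [M2 HM2].
  exists (sqrt 2 * Rmax M1 M2). intros x Hx.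
  eapply Rle_trans; [apply Cmod_2Rmax |].
  apply Rmult_le_compat_l; [apply sqrt_pos |].
  apply Rmax_lub.
  - eapply Rle_trans; [apply (HM1 x) | apply Rmax_l]; lra.
  - eapply Rle_trans; [apply (HM2 x) | apply Rmax_r]; lra.
Qed.

Fixpoint Cb (a b : R) (n : nat) (f : R -> C) : Prop :=
  bounded_on a b f /\
  match n with
  | O => True
  | S m => exists g, (forall x, a < x < b -> is_derive_C f x (g x)) /\ Cb a b m g
  end.

Lemma Cb_pred (a b : R) (n : nat) (f : R -> C) : Cb a b (S n) f -> Cb a b n f.
Proof.
  revert f. induction n as [| n IH]; intros f [Hb [g [Hg Hcb]]]; split; auto.
  exists g; split; auto.
Qed.

Lemma Cb_ext (a b : R) (n : nat) (f g : R -> C) :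
  (forall t, a < t < b -> f t = g t) -> Cb a b n f -> Cb a b n g.
Proof.
  intros Efg.
  assert (Hb : bounded_on a b f -> bounded_on a b g).
  { intros [M HM]. exists M. intros x Hx. rewrite <- Efg; auto. }
  destruct n as [| n]; intros [Hf Hder]; split; auto.
  destruct Hder as [h [Hh Hcb]]. exists h. split; auto.
  intros x Hx. apply (is_derive_C_ext_loc a b f); auto.
Qed.

Lemma Cb_const (a b : R) (n : nat) (c : C) : Cb a b n (fun _ => c).
Proof.
  revert c. induction n as [| n IH]; intros c; split; auto using bounded_on_const.
  exists (fun _ => RtoC 0). split; auto. intros; apply is_derive_C_const.
Qed.

Lemma Cb_plus (a b : R) (n : nat) (f g : R -> C) :
  Cb a b n f -> Cb a b n g -> Cb a b n (fun t => f t + g t)%C.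
Proof.
  revert f g. induction n as [| n IH]; intros f g [Hf Rf] [Hg Rg];
    split; auto using bounded_on_plus.
  destruct Rf as [f' [Hf' Cf]], Rg as [g' [Hg' Cg]].
  exists (fun t => f' t + g' t)%C. split; auto.
  intros x Hx. apply is_derive_C_plus; auto.
Qed.

Lemma Cb_mult (a b : R) (n : nat) (f g : R -> C) :
  Cb a b n f -> Cb a b n g -> Cb a b n (fun t => f t * g t)%C.
Proof.
  revert f g. induction n as [| n IH]; intros f g [Hf Rf] [Hg Rg];
    split; auto using bounded_on_mult.
  destruct Rf as [f' [Hf' Cf]], Rg as [g' [Hg' Cg]].
  exists (fun t => f' t * g t + f t * g' t)%C. split.
  - intros x Hx. apply is_derive_C_mult; auto.
  - apply Cb_plus; apply IH; auto; apply Cb_pred; split; auto; eexists; eauto.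
Qed.

Lemma Cb_comp (a b c d : R) (n : nat) (f : R -> C) (h : R -> R) :
  (forall x, a < x < b -> c < h x < d) ->
  Cb a b n (fun t => RtoC (h t)) -> Cb c d n f -> Cb a b n (fun t => f (h t)).
Proof.
  revert f h. induction n as [| n IH]; intros f h Hh Ch [[M HM] Rf];
    (split; [exists M; intros x Hx; apply HM; auto |]); auto.
  destruct Rf as [f' [Hf' Cf]], Ch as [Bh [h' [Hh' Ch']]].
  assert (Ereal : forall x, a < x < b -> h' x = RtoC (Re (h' x))).
  { intros x Hx. destruct (Hh' x Hx) as [_ Him].
    apply injective_projections; [reflexivity |].
    change (Im (h' x) = 0). apply is_derive_unique in Him. rewrite <- Him.
    exact (Derive_const 0 x). }
  exists (fun t => RtoC (Re (h' t)) * f' (h t))%C. split.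
  - intros x Hx. apply is_derive_C_comp; [apply Hf'; auto | exact (proj1 (Hh' x Hx))].
  - apply Cb_mult.
    + apply (Cb_ext a b n h'); auto.
    + apply IH; auto. apply Cb_pred. split; auto. exists h'; auto.
Qed.

Definition deriv_tower (a b : R) (n : nat) (D : nat -> R -> C) : Prop :=
  forall k, (k < n)%nat -> forall x, a < x < b -> is_derive_C (D k) x (D (S k) x).

Lemma Cb_deriv_tower (a b : R) (n : nat) (f : R -> C) :
  Cb a b n f -> exists D : nat -> R -> C,
    D O = f /\ deriv_tower a b n D /\ forall k, (k <= n)%nat -> bounded_on a b (D k).
Proof.
  revert f. induction n as [| n IH]; intros f [Hb Rf].
  - exists (fun _ => f). split; [reflexivity | split; [intros j Hj; lia | auto]].
  - destruct Rf as [g [Hg Cg]]. destruct (IH g Cg) as [D [D0 [Dd Db]]].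
    exists (fun k => match k with O => f | S k' => D k' end). split; [reflexivity | split].
    + intros [| j] Hj x Hx; simpl; [rewrite D0; auto | apply Dd; auto; lia].
    + intros [| j] Hj; auto. apply Db. lia.
Qed.

Lemma has_deriv_on_chain_Cb (a b : R) (D : nat -> R -> C) :
  a <= b -> (forall k, has_deriv_on a b (D k) (D (S k))) -> forall n k, Cb a b n (D k).
Proof.
  intros Hab Hd n. induction n as [| n IH]; intros k;
    (split; [apply (has_deriv_on_bounded a b (D k) (D (S k))); auto |]); auto.
  exists (D (S k)). split; auto.
  intros x Hx. apply (has_deriv_on_is_derive_C a b); auto.
Qed.

(** * The hypergeometric equation *)

Definition hypergeometric_eq (s : R) (mu : C) (z : R) (p0 p1 p2 : C) : Prop :=
  (RtoC z * (RtoC 1 - RtoC z) * p2 + (mu - RtoC s - RtoC 2 * mu * RtoC z) * p1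
   - mu * (mu - RtoC 1) * p0)%C = RtoC 0.

Lemma hypergeometric_eq_deriv (s : R) (mu : C) (f0 f1 f2 f3 : R -> C) (x : R) :
  0 < x < 1 ->
  (forall t, 0 < t < 1 -> hypergeometric_eq s mu t (f0 t) (f1 t) (f2 t)) ->
  (forall t, 0 < t < 1 -> is_derive_C f0 t (f1 t)) ->
  (forall t, 0 < t < 1 -> is_derive_C f1 t (f2 t)) ->
  is_derive_C f2 x (f3 x) ->
  hypergeometric_eq s (mu + RtoC 1) x (f1 x) (f2 x) (f3 x).
Proof.
  intros Hx Heq D0 D1 D2.
  pose proof (is_derive_C_RtoC (fun t => t) x 1 (is_derive_id x)) as Did.
  pose proof (fun c => is_derive_C_const c x) as Dc.
  pose proof (is_derive_C_mult _ _ x _ _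
    (is_derive_C_mult _ _ x _ _ Did (is_derive_C_minus _ _ x _ _ (Dc (RtoC 1)) Did)) D2) as T2.
  pose proof (is_derive_C_mult _ _ x _ _
    (is_derive_C_minus _ _ x _ _ (is_derive_C_minus _ _ x _ _ (Dc mu) (Dc (RtoC s)))
       (is_derive_C_mult _ _ x _ _ (Dc (RtoC 2 * mu)%C) Did)) (D1 x Hx)) as T1.
  pose proof (is_derive_C_mult _ _ x _ _ (Dc (mu * (mu - RtoC 1))%C) (D0 x Hx)) as T0.
  pose proof (is_derive_C_minus _ _ x _ _ (is_derive_C_plus _ _ x _ _ T2 T1) T0) as T.
  (* The left-hand side vanishes on (0, 1), hence so does its derivative. *)
  pose proof (is_derive_C_unique 0 1 _ _ x _ _ Heq Hx T (Dc (RtoC 0))) as Hzero.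
  unfold hypergeometric_eq. rewrite <- Hzero. ring.
Qed.

Lemma interior_max_derive (v v1 v2 : R -> R) (a b c : R) :
  a < c < b ->
  (forall x, a < x < b -> is_derive v x (v1 x)) ->
  (forall x, a < x < b -> is_derive v1 x (v2 x)) ->
  (forall x, a < x < b -> v x <= v c) -> v1 c = 0 /\ v2 c <= 0.
Proof.
  intros Hc Hv Hv1 Hmax.
  assert (Hcrit : v1 c = 0).
  { assert (Hl : derivable_pt_lim v c (v1 c)) by (apply is_derive_Reals, Hv; lra).
    exact (deriv_maximum v a b c (exist _ (v1 c) Hl) (proj1 Hc) (proj2 Hc)
             (fun x Hxa Hxb => Hmax x (conj Hxa Hxb))). }
  split; [exact Hcrit |].
  destruct (Rle_lt_dec (v2 c) 0) as [Hle | Hgt]; [exact Hle | exfalso].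
  (* Otherwise v1 > 0 just right of c, and v increases there by the mean value theorem. *)
  assert (Hl2 : derivable_pt_lim v1 c (v2 c)) by (apply is_derive_Reals, Hv1; lra).
  destruct (Hl2 (v2 c / 2) ltac:(lra)) as [del Hdel].
  assert (Hm : 0 < Rmin del (b - c)) by (apply Rmin_glb_lt; [apply cond_pos | lra]).
  pose proof (Rmin_l del (b - c)). pose proof (Rmin_r del (b - c)).
  set (h := Rmin del (b - c) / 2).
  destruct (MVT_cor2 v v1 c (c + h)) as [xi [Hmvt Hxi]]; [unfold h; lra | |].
  { intros x Hx. apply is_derive_Reals, Hv. unfold h in Hx. lra. }
  assert (Hd : Rabs (xi - c) < del) by (rewrite Rabs_right; unfold h in Hxi; lra).
  specialize (Hdel (xi - c) ltac:(lra) Hd).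
  replace (c + (xi - c)) with xi in Hdel by ring.
  rewrite Hcrit, Rminus_0_r in Hdel. apply Rabs_def2 in Hdel.
  assert (Hpos : 0 < v1 xi).
  { replace (v1 xi) with (v1 xi / (xi - c) * (xi - c)) by (field; lra).
    apply Rmult_lt_0_compat; lra. }
  assert (v (c + h) <= v c) by (apply Hmax; unfold h; lra).
  assert (0 < v1 xi * (c + h - c)) by (apply Rmult_lt_0_compat; unfold h; lra).
  lra.
Qed.

Lemma interior_max_of_vanishing_ends (v : R -> R) (K x1 : R) :
  (forall x, 0 < x < 1 -> continuity_pt v x) ->
  (forall t, 0 < t < 1 -> v t <= K * (t * (1 - t))) ->
  0 < x1 < 1 -> 0 < v x1 ->
  exists c, 0 < c < 1 /\ forall t, 0 < t < 1 -> v t <= v c.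
Proof.
  intros Hcont Hle Hx1 Hv1.
  assert (HK : 0 < K).
  { specialize (Hle x1 Hx1). assert (0 < x1 * (1 - x1)) by nra. nra. }
  pose proof (Rmin_l (Rmin x1 (1 - x1)) (v x1 / (2 * K))) as Hd1.
  pose proof (Rmin_r (Rmin x1 (1 - x1)) (v x1 / (2 * K))) as Hd2.
  set (del := Rmin (Rmin x1 (1 - x1)) (v x1 / (2 * K))) in Hd1, Hd2.
  assert (Hdel : 0 < del).
  { apply Rmin_glb_lt; [apply Rmin_glb_lt; lra | apply Rdiv_lt_0_compat; lra]. }
  pose proof (Rmin_l x1 (1 - x1)). pose proof (Rmin_r x1 (1 - x1)).
  assert (HKdel : K * del <= v x1 / 2).
  { apply (Rmult_le_compat_l K) in Hd2; [| lra].
    replace (K * (v x1 / (2 * K))) with (v x1 / 2) in Hd2 by (field; lra). exact Hd2. }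
  destruct (continuity_ab_maj v del (1 - del) ltac:(lra)) as [c [Hmax Hc]].
  { intros x Hx. apply Hcont. lra. }
  exists c. split; [lra |].
  intros t Ht.
  destruct (Rle_lt_dec del t); [destruct (Rle_lt_dec t (1 - del)) |]; [apply Hmax; lra | |];
    assert (t * (1 - t) <= del) by nra;
    assert (K * (t * (1 - t)) <= K * del) by (apply Rmult_le_compat_l; lra);
    pose proof (Hle t Ht); pose proof (Hmax x1 ltac:(lra)); lra.
Qed.

(* With P = |f|^2, Q = Re (conj f * f'), W = Im (conj f * f'), V = |f'|^2 and
   R2 = Re (conj f * f'') at an interior maximum c of v = c (1 - c) P, the
   hypotheses are v' = 0, v'' <= 0, Lagrange's identity and the real part of
   conj f times the hypergeometric equation with parameter m + i tau. *)
Lemma hypergeometric_energy_max_absurd (m tau s c P Q W V R2 : R) :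
  0 <= s <= 1 -> tau ^ 2 + 3 <= m -> 0 < c < 1 -> 0 < P ->
  (1 - 2 * c) * P + 2 * (c * (1 - c)) * Q = 0 ->
  -2 * P + 4 * (1 - 2 * c) * Q + 2 * (c * (1 - c)) * (V + R2) <= 0 ->
  P * V = Q ^ 2 + W ^ 2 ->
  c * (1 - c) * R2 + (m * (1 - 2 * c) - s) * Q - tau * (1 - 2 * c) * W
    = (m * m - m - tau * tau) * P ->
  False.
Proof.
  intros Hs Hm Hc HP Hv1 Hv2 Hlag Heq.
  set (t := 1 - 2 * c) in *. set (Z := c * (1 - c)) in *.
  set (ReE := m * m - m - tau * tau) in *.
  set (K := 4 * Z * (ReE - 1) - 3 * t ^ 2 + 2 * t * (m * t - s) - tau ^ 2 * t ^ 2).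
  assert (E : 2 * Z * P * (-2 * P + 4 * t * Q + 2 * Z * (V + R2))
              - (K * P ^ 2 + (2 * Z * W + tau * t * P) ^ 2) =
     4 * Z * P * (Z * R2 + (m * t - s) * Q - tau * t * W - ReE * P)
     + 4 * Z ^ 2 * (P * V - (Q ^ 2 + W ^ 2))
     + (4 * t * P + (2 * Z * Q - t * P) - 2 * (m * t - s) * P) * (t * P + 2 * Z * Q))
    by (unfold K; ring).
  (* So modulo the hypotheses 2 Z P v'' = K P^2 + (2 Z W + tau t P)^2, and K > 0. *)
  assert (HZ : 0 < Z) by (unfold Z; nra).
  assert (2 * Z * P * (-2 * P + 4 * t * Q + 2 * Z * (V + R2)) <= 0).
  { assert (0 <= 2 * Z * P) by nra. nra. }
  rewrite Hlag, Hv1, Heq in E.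
  assert (HK : K * P ^ 2 <= 0).
  { pose proof (pow2_ge_0 (2 * Z * W + tau * t * P)). nra. }
  assert (HK2 : K <= 0).
  { destruct (Rle_lt_dec K 0); auto.
    assert (0 < K * P ^ 2) by (apply Rmult_lt_0_compat; nra). lra. }
  assert (4 * Z = 1 - t ^ 2) by (unfold Z, t; ring).
  assert (-1 < t < 1) by (unfold t; lra).
  assert (ReE - 1 >= 5) by (unfold ReE; nra).
  assert (t ^ 2 * (2 * m - 3 - tau ^ 2) >= 3 * t ^ 2) by nra.
  assert (s * t <= 1) by nra.
  assert (4 * Z * (ReE - 1) >= 5 * (1 - t ^ 2)) by nra.
  unfold K in HK2. nra.
Qed.

Definition Cdot (u w : C) : R := Re u * Re w + Im u * Im w.

Lemma is_derive_Cdot (f g : R -> C) (x : R) (lf lg : C) :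
  is_derive_C f x lf -> is_derive_C g x lg ->
  is_derive (fun t => Cdot (f t) (g t)) x (Cdot lf (g x) + Cdot (f x) lg).
Proof.
  intros [Hf1 Hf2] [Hg1 Hg2].
  pose proof (fun u w du dw Hu Hw => is_derive_mult u w x du dw Hu Hw Rmult_comm) as Hmult.
  replace (Cdot lf (g x) + Cdot (f x) lg)
    with (Re lf * Re (g x) + Re (f x) * Re lg + (Im lf * Im (g x) + Im (f x) * Im lg))
    by (unfold Cdot; ring).
  exact (is_derive_plus _ _ x _ _ (Hmult _ _ _ _ Hf1 Hg1) (Hmult _ _ _ _ Hf2 Hg2)).
Qed.

Lemma is_derive_energy (f0 f1 : R -> C) (t : R) :
  is_derive_C f0 t (f1 t) ->
  is_derive (fun t => t * (1 - t) * Cdot (f0 t) (f0 t)) t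
    ((1 - 2 * t) * Cdot (f0 t) (f0 t) + 2 * (t * (1 - t)) * Cdot (f0 t) (f1 t)).
Proof.
  intros D0.
  assert (DZ : is_derive (fun t => t * (1 - t)) t (1 - 2 * t)) by (auto_derive; auto; ring).
  pose proof (is_derive_mult _ _ t _ _ DZ (is_derive_Cdot _ _ t _ _ D0 D0) Rmult_comm) as H.
  match type of H with is_derive _ _ ?l =>
    replace (_ + _) with l by (unfold Cdot, plus, mult; simpl; ring) end.
  exact H.
Qed.

Lemma is_derive_energy_deriv (f0 f1 f2 : R -> C) (t : R) :
  is_derive_C f0 t (f1 t) -> is_derive_C f1 t (f2 t) ->
  is_derive (fun t => (1 - 2 * t) * Cdot (f0 t) (f0 t) + 2 * (t * (1 - t)) * Cdot (f0 t) (f1 t)) t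
    (-2 * Cdot (f0 t) (f0 t) + 4 * (1 - 2 * t) * Cdot (f0 t) (f1 t)
     + 2 * (t * (1 - t)) * (Cdot (f1 t) (f1 t) + Cdot (f0 t) (f2 t))).
Proof.
  intros D0 D1.
  assert (DZ1 : is_derive (fun t => 1 - 2 * t) t (-2)) by (auto_derive; auto; ring).
  assert (DZ2 : is_derive (fun t => 2 * (t * (1 - t))) t (2 * (1 - 2 * t)))
    by (auto_derive; auto; ring).
  pose proof (is_derive_plus _ _ t _ _
    (is_derive_mult _ _ t _ _ DZ1 (is_derive_Cdot _ _ t _ _ D0 D0) Rmult_comm)
    (is_derive_mult _ _ t _ _ DZ2 (is_derive_Cdot _ _ t _ _ D0 D1) Rmult_comm)) as H.
  match type of H with is_derive _ _ ?l =>
    replace (_ + _) with l by (unfold Cdot, plus, mult; simpl; ring) end.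
  exact H.
Qed.

Lemma hypergeometric_eq_Cdot (s : R) (mu : C) (z : R) (p0 p1 p2 : C) :
  hypergeometric_eq s mu z p0 p1 p2 ->
  z * (1 - z) * Cdot p0 p2 + (Re mu * (1 - 2 * z) - s) * Cdot p0 p1
    - Im mu * (1 - 2 * z) * (Re p0 * Im p1 - Im p0 * Re p1)
  = (Re mu * Re mu - Re mu - Im mu * Im mu) * Cdot p0 p0.
Proof.
  intros E. unfold hypergeometric_eq in E.
  destruct mu as [m tau], p0 as [p q], p1 as [p1 q1], p2 as [p2 q2].
  pose proof (f_equal fst E) as E1. pose proof (f_equal snd E) as E2.
  simpl in E1, E2. unfold Cdot, Re, Im; simpl.
  apply (Rmult_eq_compat_l p) in E1. apply (Rmult_eq_compat_l q) in E2. lra.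
Qed.

Lemma hypergeometric_bounded_sol_eq0 (s : R) (mu : C) (f0 f1 f2 : R -> C) :
  0 <= s <= 1 -> Im mu ^ 2 + 3 <= Re mu -> bounded_on 0 1 f0 ->
  (forall x, 0 < x < 1 -> is_derive_C f0 x (f1 x)) ->
  (forall x, 0 < x < 1 -> is_derive_C f1 x (f2 x)) ->
  (forall x, 0 < x < 1 -> hypergeometric_eq s mu x (f0 x) (f1 x) (f2 x)) ->
  forall x, 0 < x < 1 -> f0 x = 0.
Proof.
  intros Hs Hmu [M HM] D0 D1 Heq x1 Hx1.
  destruct (Req_dec (Cmod (f0 x1)) 0) as [Hz | Hnz]; [exact (Cmod_eq_0 _ Hz) | exfalso].
  set (v := fun t => t * (1 - t) * Cdot (f0 t) (f0 t)).
  set (v1 := fun t => (1 - 2 * t) * Cdot (f0 t) (f0 t) + 2 * (t * (1 - t)) * Cdot (f0 t) (f1 t)).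
  assert (Dv : forall t, 0 < t < 1 -> is_derive v t (v1 t))
    by (intros; apply is_derive_energy; auto).
  set (v2 := fun t => -2 * Cdot (f0 t) (f0 t) + 4 * (1 - 2 * t) * Cdot (f0 t) (f1 t)
                      + 2 * (t * (1 - t)) * (Cdot (f1 t) (f1 t) + Cdot (f0 t) (f2 t))).
  assert (Dv1 : forall t, 0 < t < 1 -> is_derive v1 t (v2 t))
    by (intros; apply is_derive_energy_deriv; auto).
  assert (Hnorm : forall t, Cdot (f0 t) (f0 t) = Cmod (f0 t) ^ 2)
    by (intros; rewrite Cmod2_alt; unfold Cdot; ring).
  assert (Hends : forall t, 0 < t < 1 -> v t <= M ^ 2 * (t * (1 - t))).
  { intros t Ht. unfold v. rewrite Hnorm.
    pose proof (HM t Ht). pose proof (Cmod_ge_0 (f0 t)).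
    assert (Cmod (f0 t) ^ 2 <= M ^ 2) by nra. assert (0 < t * (1 - t)) by nra. nra. }
  assert (Hvx1 : 0 < v x1).
  { unfold v. rewrite Hnorm. pose proof (Cmod_ge_0 (f0 x1)).
    apply Rmult_lt_0_compat; [nra | apply pow_lt; lra]. }
  destruct (interior_max_of_vanishing_ends v (M ^ 2) x1) as [c [Hc Hmax]]; auto.
  { intros x Hx. apply derivable_continuous_pt. exists (v1 x). apply is_derive_Reals, Dv; auto. }
  destruct (interior_max_derive v v1 v2 0 1 c Hc Dv Dv1 Hmax) as [Hcrit Hconcave].
  assert (HP : 0 < Cdot (f0 c) (f0 c)).
  { pose proof (Hmax x1 Hx1). unfold v in *. assert (0 < c * (1 - c)) by nra. nra. }
  apply (hypergeometric_energy_max_absurd (Re mu) (Im mu) s c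
    (Cdot (f0 c) (f0 c)) (Cdot (f0 c) (f1 c)) (Re (f0 c) * Im (f1 c) - Im (f0 c) * Re (f1 c))
    (Cdot (f1 c) (f1 c)) (Cdot (f0 c) (f2 c))); auto.
  - unfold Cdot. ring.
  - apply hypergeometric_eq_Cdot, Heq, Hc.
Qed.

Lemma shifted_parameter_neq (lam : C) (k : nat) :
  -1 < Re lam -> lam <> 0 -> lam <> 1 ->
  (lam + RtoC (INR k))%C <> 0 /\ (lam + RtoC (INR k) - 1)%C <> 0.
Proof.
  intros Hre H0 H1.
  assert (Hpos : forall r, 0 < Re lam + r -> (lam + RtoC r)%C <> 0).
  { intros r Hr E. apply (f_equal Re) in E. unfold Re in *. simpl in E. lra. }
  assert (Hshift : forall r, (lam + RtoC r - 1)%C = (lam + RtoC (r - 1))%C)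
    by (intros; rewrite RtoC_minus; ring).
  rewrite Hshift.
  destruct k as [| [| k]]; [simpl INR .. | rewrite !S_INR].
  - replace (lam + RtoC 0)%C with lam by ring. split; [exact H0 |].
    intros E. apply H1. replace lam with (lam + RtoC (0 - 1) + 1)%C by (rewrite RtoC_minus; ring).
    rewrite E. ring.
  - replace (lam + RtoC (1 - 1))%C with lam by (rewrite RtoC_minus; ring).
    split; [apply Hpos; lra | exact H0].
  - pose proof (pos_INR k). split; apply Hpos; lra.
Qed.

Lemma hypergeometric_eq_tower (s : R) (lam : C) (n : nat) (D : nat -> R -> C) :
  deriv_tower 0 1 (n + 2) D ->
  (forall x, 0 < x < 1 -> hypergeometric_eq s lam x (D 0%nat x) (D 1%nat x) (D 2%nat x)) ->
  forall k, (k <= n)%nat -> forall x, 0 < x < 1 ->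
    hypergeometric_eq s (lam + RtoC (INR k)) x (D k x) (D (S k) x) (D (S (S k)) x).
Proof.
  intros HD Heq k. induction k as [| k IH]; intros Hk x Hx.
  - simpl INR. replace (lam + RtoC 0)%C with lam by ring. apply Heq; auto.
  - replace (lam + RtoC (INR (S k)))%C with (lam + RtoC (INR k) + RtoC 1)%C
      by (rewrite S_INR, RtoC_plus; ring).
    apply hypergeometric_eq_deriv with (f0 := D k); auto.
    + intros t Ht. apply IH; auto. lia.
    + intros t Ht. apply HD; auto. lia.
    + intros t Ht. apply HD; auto. lia.
    + apply HD; auto. lia.
Qed.

Lemma hypergeometric_eq_zero_derivs (s : R) (mu : C) (z : R) (p0 : C) :
  mu <> 0 -> (mu - 1)%C <> 0 -> hypergeometric_eq s mu z p0 0 0 -> p0 = 0.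
Proof.
  intros Hmu Hmu1 E. unfold hypergeometric_eq in E.
  assert (E' : (- (mu * (mu - 1) * p0))%C = 0) by (rewrite <- E; ring).
  replace p0 with (- / (mu * (mu - 1)) * - (mu * (mu - 1) * p0))%C by (field; auto).
  rewrite E'. ring.
Qed.

Lemma hypergeometric_eq_tower_descend (s : R) (lam : C) (n : nat) (D : nat -> R -> C) :
  -1 < Re lam -> lam <> 0 -> lam <> 1 ->
  deriv_tower 0 1 (n + 2) D ->
  (forall k, (k <= n)%nat -> forall x, 0 < x < 1 ->
    hypergeometric_eq s (lam + RtoC (INR k)) x (D k x) (D (S k) x) (D (S (S k)) x)) ->
  (forall x, 0 < x < 1 -> D n x = 0) ->
  forall x, 0 < x < 1 -> D 0%nat x = 0.
Proof.
  intros Hre H0 H1 HD Heq Hn.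
  assert (Hdown : forall j, (j <= n)%nat -> forall x, 0 < x < 1 -> D (n - j)%nat x = 0).
  { induction j as [| j IH]; intros Hj x Hx.
    - rewrite Nat.sub_0_r. auto.
    - set (k := (n - S j)%nat).
      assert (Z1 : forall t, 0 < t < 1 -> D (S k) t = 0).
      { intros t Ht. replace (S k) with (n - j)%nat by (unfold k; lia). apply IH; auto; lia. }
      assert (Z2 : D (S (S k)) x = 0).
      { apply (is_derive_C_unique 0 1 (D (S k)) (fun _ => 0) x); auto.
        - apply HD; auto. unfold k; lia.
        - apply is_derive_C_const. }
      destruct (shifted_parameter_neq lam k Hre H0 H1) as [Hmu Hmu1].
      pose proof (Heq k ltac:(unfold k; lia) x Hx) as E.
      rewrite Z2, (Z1 x Hx) in E.
      exact (hypergeometric_eq_zero_derivs s _ x _ Hmu Hmu1 E). }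
  intros x Hx. replace 0%nat with (n - n)%nat by lia. apply Hdown; auto.
Qed.

Theorem hypergeometric_Cb_sol_eq0 (s : R) (lam : C) (f f1 f2 : R -> C) :
  0 <= s <= 1 -> -1 < Re lam -> lam <> 0 -> lam <> 1 ->
  (forall n, Cb 0 1 n f) ->
  (forall x, 0 < x < 1 -> is_derive_C f x (f1 x)) ->
  (forall x, 0 < x < 1 -> is_derive_C f1 x (f2 x)) ->
  (forall x, 0 < x < 1 -> hypergeometric_eq s lam x (f x) (f1 x) (f2 x)) ->
  forall x, 0 < x < 1 -> f x = 0.
Proof.
  intros Hs Hre H0 H1 Hf D1 D2 Heq.
  destruct (INR_unbounded (Im lam ^ 2 + 3 - Re lam)) as [N HN].
  destruct (Cb_deriv_tower 0 1 (N + 2) f (Hf _)) as [D [HD0 [HD Hbnd]]].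
  assert (E1 : forall x, 0 < x < 1 -> D 1%nat x = f1 x).
  { intros x Hx. apply (is_derive_C_unique 0 1 (D 0%nat) f x); auto.
    - intros; rewrite HD0; reflexivity.
    - apply HD; auto; lia. }
  assert (E2 : forall x, 0 < x < 1 -> D 2%nat x = f2 x).
  { intros x Hx. apply (is_derive_C_unique 0 1 (D 1%nat) f1 x); auto.
    apply HD; auto; lia. }
  assert (HeqD : forall k, (k <= N)%nat -> forall x, 0 < x < 1 ->
    hypergeometric_eq s (lam + RtoC (INR k)) x (D k x) (D (S k) x) (D (S (S k)) x)).
  { apply hypergeometric_eq_tower; auto. intros x Hx. rewrite HD0, E1, E2; auto. }
  intros x Hx. rewrite <- HD0.
  apply (hypergeometric_eq_tower_descend s lam N D); auto.
  apply (hypergeometric_bounded_sol_eq0 s (lam + RtoC (INR N)) (D N) (D (S N)) (D (S (S N))));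
    auto; try (intros; apply HD; auto; lia).
  - replace (Im (lam + RtoC (INR N))) with (Im lam) by (unfold Im; simpl; ring).
    replace (Re (lam + RtoC (INR N))) with (Re lam + INR N) by (unfold Re; simpl; ring).
    lra.
  - apply Hbnd. lia.
Qed.

(** * The mode equation *)

Definition Cexp (z : C) : C := (exp (Re z) * cos (Im z), exp (Re z) * sin (Im z)).

Lemma Cmod_Cexp (z : C) : Cmod (Cexp z) = exp (Re z).
Proof.
  unfold Cmod, Cexp; simpl.
  replace (exp (Re z) * cos (Im z) * (exp (Re z) * cos (Im z) * 1)
           + exp (Re z) * sin (Im z) * (exp (Re z) * sin (Im z) * 1))
    with (exp (Re z) * exp (Re z) * (Rsqr (sin (Im z)) + Rsqr (cos (Im z))))
    by (unfold Rsqr; ring).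
  rewrite sin2_cos2, Rmult_1_r. apply sqrt_square. left; apply exp_pos.
Qed.

Lemma Cexp_neq0 (z : C) : Cexp z <> 0.
Proof.
  intros E. pose proof (exp_pos (Re z)) as Hpos.
  rewrite <- Cmod_Cexp, E, Cmod_0 in Hpos. lra.
Qed.

Lemma is_derive_C_Cexp (lam : C) (g : R -> R) (x dg : R) :
  is_derive g x dg ->
  is_derive_C (fun t => Cexp (lam * RtoC (g t))) x (RtoC dg * lam * Cexp (lam * RtoC (g x)))%C.
Proof.
  intros Hg. destruct lam as [m tau].
  unfold is_derive_C, Cexp, Re, Im; simpl.
  assert (Hex : ex_derive g x) by (exists dg; exact Hg).
  split; auto_derive; repeat split; auto;
    replace (Derive (fun y => g y) x) with dg by (symmetry; apply is_derive_unique; exact Hg);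
    rewrite ?Rmult_0_r, ?Rmult_0_l, ?Ropp_0, ?Rplus_0_r, ?Rplus_0_l, ?Rminus_0_r; ring.
Qed.

Definition mobius_den (s z : R) : R := 1 + s - 2 * s * z.

Definition mobius (s z : R) : R := (2 * z - 1 - s) / mobius_den s z.

Lemma mobius_den_bounds (s z : R) :
  0 <= s < 1 -> 0 <= z <= 1 -> 1 - s <= mobius_den s z <= 1 + s.
Proof. intros; unfold mobius_den; nra. Qed.

Lemma mobius_range (s z : R) : 0 <= s < 1 -> 0 < z < 1 -> -1 < mobius s z < 1.
Proof.
  intros Hs Hz. pose proof (mobius_den_bounds s z Hs ltac:(lra)) as Hd.
  unfold mobius. split.
  - apply Rlt_div_r; [lra |]. unfold mobius_den in *. nra.
  - apply Rlt_div_l; [lra |]. unfold mobius_den in *. nra.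
Qed.

Lemma mobius_surj (s y : R) :
  0 <= s < 1 -> -1 < y < 1 -> exists z, 0 < z < 1 /\ mobius s z = y.
Proof.
  intros Hs Hy. assert (Hq : 0 < 1 + s * y) by nra.
  exists ((1 + y) * (1 + s) / (2 * (1 + s * y))). split.
  - split; [apply Rdiv_lt_0_compat; nra | apply Rlt_div_l; nra].
  - unfold mobius, mobius_den. field. split; nra.
Qed.

Lemma is_derive_inv_mobius_den_pow (s c : R) (k : nat) (z : R) :
  0 <= s < 1 -> 0 <= z <= 1 ->
  is_derive (fun t => c / mobius_den s t ^ k) z (c * (2 * s * INR k) / mobius_den s z ^ S k).
Proof.
  intros Hs Hz. pose proof (mobius_den_bounds s z Hs Hz) as Hd. unfold mobius_den in *.
  auto_derive; [apply pow_nonzero; lra |].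
  destruct k as [| k]; [simpl; field; lra |].
  rewrite S_INR. replace (Init.Nat.pred (S k)) with k by reflexivity. simpl.
  replace (1 + s + - (2 * s * z)) with (1 + s - 2 * s * z) by ring.
  field. split; [apply pow_nonzero |]; lra.
Qed.

Lemma Cb_inv_mobius_den_pow (s : R) (n : nat) :
  0 <= s < 1 -> forall (k : nat) (c : R), Cb 0 1 n (fun t => RtoC (c / mobius_den s t ^ k)).
Proof.
  intros Hs. induction n as [| n IH]; intros k c; split.
  1, 3: exists (Rabs c / (1 - s) ^ k); intros x Hx;
    pose proof (mobius_den_bounds s x Hs ltac:(lra)) as Hd;
    rewrite Cmod_R; unfold Rdiv;
    rewrite Rabs_mult, Rabs_inv, (Rabs_pos_eq (mobius_den s x ^ k)) by (apply pow_le; lra);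
    apply Rmult_le_compat_l; [apply Rabs_pos |];
    apply Rinv_le_contravar; [apply pow_lt; lra | apply pow_incr; lra].
  - exact I.
  - exists (fun t => RtoC (c * (2 * s * INR k) / mobius_den s t ^ S k)). split; auto.
    intros x Hx. apply is_derive_C_RtoC, is_derive_inv_mobius_den_pow; auto; lra.
Qed.

Lemma is_derive_mobius (s z : R) :
  0 <= s < 1 -> 0 <= z <= 1 ->
  is_derive (mobius s) z (2 * (1 - s * s) / mobius_den s z ^ 2).
Proof.
  intros Hs Hz. pose proof (mobius_den_bounds s z Hs Hz) as Hd.
  unfold mobius, mobius_den in *. auto_derive; [lra | field; lra].
Qed.

Lemma Cb_mobius (s : R) (n : nat) : 0 <= s < 1 -> Cb 0 1 n (fun t => RtoC (mobius s t)).
Proof.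
  intros Hs.
  assert (Hb : bounded_on 0 1 (fun t => RtoC (mobius s t))).
  { exists 1. intros x Hx. rewrite Cmod_R. apply Rabs_le.
    pose proof (mobius_range s x Hs Hx). lra. }
  destruct n as [| n]; split; auto.
  exists (fun t => RtoC (2 * (1 - s * s) / mobius_den s t ^ 2)). split.
  - intros x Hx. apply is_derive_C_RtoC, is_derive_mobius; auto; lra.
  - apply Cb_inv_mobius_den_pow; auto.
Qed.

(* ((1 - s^2) / (1 + s - 2 s z))^lam: after the substitution y = mobius s z,
   multiplying by it turns the mode equation into the hypergeometric one. *)
Definition mode_weight (s : R) (lam : C) (z : R) : C :=
  Cexp (lam * RtoC (ln ((1 - s * s) / mobius_den s z))).

Lemma is_derive_C_mode_weight (s : R) (lam : C) (z : R) :
  0 <= s < 1 -> 0 <= z <= 1 ->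
  is_derive_C (mode_weight s lam) z
    (RtoC (2 * s / mobius_den s z ^ 1) * lam * mode_weight s lam z)%C.
Proof.
  intros Hs Hz. pose proof (mobius_den_bounds s z Hs Hz) as Hd.
  apply is_derive_C_Cexp.
  unfold mobius_den in *. auto_derive.
  - repeat split; [lra |]. apply Rmult_lt_0_compat; [nra | apply Rinv_0_lt_compat; lra].
  - field. split; nra.
Qed.

Lemma Cb_mode_weight (s : R) (lam : C) (n : nat) : 0 <= s < 1 -> Cb 0 1 n (mode_weight s lam).
Proof.
  intros Hs.
  assert (Hb : bounded_on 0 1 (mode_weight s lam)).
  { exists (exp (Rabs (Re lam) * (Rabs (ln (1 - s)) + Rabs (ln (1 + s))))).
    intros x Hx. pose proof (mobius_den_bounds s x Hs ltac:(lra)) as Hd.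
    unfold mode_weight. rewrite Cmod_Cexp.
    assert (Hq : 1 - s <= (1 - s * s) / mobius_den s x <= 1 + s).
    { split; [apply Rle_div_r | apply Rle_div_l]; nra. }
    set (L := ln ((1 - s * s) / mobius_den s x)).
    assert (HL : Rabs L <= Rabs (ln (1 - s)) + Rabs (ln (1 + s))).
    { assert (ln (1 - s) <= L <= ln (1 + s)) by (unfold L; split; apply ln_le; lra).
      pose proof (Rabs_pos (ln (1 - s))). pose proof (Rabs_pos (ln (1 + s))).
      pose proof (Rle_abs (ln (1 + s))). pose proof (Rle_abs (- ln (1 - s))).
      rewrite Rabs_Ropp in *. unfold Rabs at 1; destruct Rcase_abs; lra. }
    assert (Harg : Re (lam * RtoC L)%C <= Rabs (Re lam) * (Rabs (ln (1 - s)) + Rabs (ln (1 + s)))).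
    { replace (Re (lam * RtoC L)%C) with (Re lam * L) by (simpl; unfold Re, Im; ring).
      eapply Rle_trans; [apply Rle_abs |]. rewrite Rabs_mult.
      apply Rmult_le_compat_l; [apply Rabs_pos | exact HL]. }
    destruct (Rle_lt_or_eq_dec _ _ Harg) as [Hlt | ->]; [left; apply exp_increasing, Hlt | right; reflexivity]. }
  induction n as [| n IH]; split; auto.
  exists (fun t => RtoC (2 * s / mobius_den s t ^ 1) * lam * mode_weight s lam t)%C. split.
  - intros x Hx. apply is_derive_C_mode_weight; auto; lra.
  - apply Cb_mult; auto. apply Cb_mult; [apply Cb_inv_mobius_den_pow; auto | apply Cb_const].
Qed.

Definition mode_eq (alpha : R) (lam : C) (y : R) (p0 p1 p2 : C) : Prop :=
  ((lam * lam + lam - RtoC 2 * RtoC alpha * lam / RtoC (1 + sqrt (1 - alpha) * y)) * p0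
   + (RtoC 2 * lam + RtoC 2 - RtoC 2 * RtoC alpha / RtoC (1 + sqrt (1 - alpha) * y)) * RtoC y * p1
   + (RtoC y * RtoC y - RtoC 1) * p2)%C = RtoC 0.

Lemma hypergeometric_eq_of_mode_eq (s z : R) (lam W q0 q1 q2 : C) :
  0 <= s < 1 -> 0 < z < 1 ->
  mode_eq (1 - s * s) lam (mobius s z) q0 q1 q2 ->
  let L1 := RtoC (2 * s / mobius_den s z ^ 1) in
  let L2 := RtoC (2 * s * (2 * s * INR 1) / mobius_den s z ^ 2) in
  let H1 := RtoC (2 * (1 - s * s) / mobius_den s z ^ 2) in
  let H2 := RtoC (2 * (1 - s * s) * (2 * s * INR 2) / mobius_den s z ^ 3) in
  hypergeometric_eq s lam z (W * q0)
    (L1 * lam * W * q0 + W * (H1 * q1))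
    ((L2 * lam + L1 * lam * (L1 * lam)) * W * q0 + RtoC 2 * (L1 * lam * W) * (H1 * q1)
     + W * (H2 * q1 + H1 * (H1 * q2)))%C.
Proof.
  intros Hs Hz Hmode L1 L2 H1 H2.
  pose proof (mobius_den_bounds s z Hs ltac:(lra)) as Hd.
  assert (Hsq : sqrt (1 - (1 - s * s)) = s)
    by (replace (1 - (1 - s * s)) with (s * s) by ring; apply sqrt_square; lra).
  assert (Hone : 1 + s * mobius s z = (1 - s * s) / mobius_den s z)
    by (unfold mobius, mobius_den in *; field; lra).
  unfold mode_eq in Hmode. rewrite Hsq, Hone in Hmode.
  unfold hypergeometric_eq, L1, L2, H1, H2, mobius in *.
  set (d := mobius_den s z) in *.
  (* The hypergeometric expression is - (1 - s^2) / d^2 * W times the mode expression. *)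
  match type of Hmode with ?E = _ =>
    transitivity (- RtoC ((1 - s * s) / d ^ 2) * W * E)%C; [| rewrite Hmode; ring] end.
  simpl INR.
  rewrite !RtoC_div
    by first [apply pow_nonzero; lra | lra | apply Rgt_not_eq, Rdiv_lt_0_compat; nra].
  repeat rewrite ?RtoC_plus, ?RtoC_minus, ?RtoC_mult, ?RtoC_pow.
  assert (Ed : RtoC d = (1 + RtoC s - 2 * RtoC s * RtoC z)%C)
    by (unfold d, mobius_den; rewrite RtoC_minus, RtoC_plus, !RtoC_mult; reflexivity).
  rewrite Ed.
  field.
  split; intros E; apply (f_equal Re) in E; unfold d, mobius_den in Hd; simpl in E; nra.
Qed.

Lemma sqrt_one_minus_bounds (alpha : R) : 0 < alpha <= 1 -> 0 <= sqrt (1 - alpha) < 1.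
Proof.
  intros Ha. split; [apply sqrt_pos |].
  apply (Rlt_le_trans _ (sqrt 1)); [apply sqrt_lt_1_alt; lra | rewrite sqrt_1; lra].
Qed.

Lemma mode_transform_eq0 (s : R) (lam : C) (phi d1 d2 : R -> C) :
  0 <= s < 1 -> -1 < Re lam -> lam <> 0 -> lam <> 1 ->
  smooth_on (-1) 1 phi -> has_deriv_on (-1) 1 phi d1 -> has_deriv_on (-1) 1 d1 d2 ->
  (forall y, -1 < y < 1 -> mode_eq (1 - s * s) lam y (phi y) (d1 y) (d2 y)) ->
  forall z, 0 < z < 1 -> (mode_weight s lam z * phi (mobius s z))%C = 0.
Proof.
  intros Hs Hre Hl0 Hl1 [D [HD0 HD]] Hd1 Hd2 Hmode.
  set (w := mode_weight s lam). set (h := mobius s).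
  set (L1 := fun t => RtoC (2 * s / mobius_den s t ^ 1)).
  set (L2 := fun t => RtoC (2 * s * (2 * s * INR 1) / mobius_den s t ^ 2)).
  set (H1 := fun t => RtoC (2 * (1 - s * s) / mobius_den s t ^ 2)).
  set (H2 := fun t => RtoC (2 * (1 - s * s) * (2 * s * INR 2) / mobius_den s t ^ 3)).
  set (psi1 := fun t => (L1 t * lam * w t * phi (h t) + w t * (H1 t * d1 (h t)))%C).
  set (psi2 := fun t => ((L2 t * lam + L1 t * lam * (L1 t * lam)) * w t * phi (h t)
                         + RtoC 2 * (L1 t * lam * w t) * (H1 t * d1 (h t))
                         + w t * (H2 t * d1 (h t) + H1 t * (H1 t * d2 (h t))))%C).
  assert (Dw : forall x, 0 < x < 1 -> is_derive_C w x (L1 x * lam * w x)%C)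
    by (intros; apply is_derive_C_mode_weight; auto; lra).
  assert (Dcomp : forall f f' x, 0 < x < 1 -> has_deriv_on (-1) 1 f f' ->
                    is_derive_C (fun t => f (h t)) x (H1 x * f' (h x))%C).
  { intros f f' x Hx Hf. apply is_derive_C_comp.
    - apply (has_deriv_on_is_derive_C (-1) 1); auto. apply mobius_range; auto.
    - apply is_derive_mobius; auto; lra. }
  apply (hypergeometric_Cb_sol_eq0 s lam _ psi1 psi2); auto; [lra | | | |].
  - intros n. apply Cb_mult; [apply Cb_mode_weight; auto |].
    apply (Cb_comp 0 1 (-1) 1); [intros; apply mobius_range; auto | apply Cb_mobius; auto |].
    rewrite <- HD0. apply has_deriv_on_chain_Cb; auto; lra.
  - intros x Hx. exact (is_derive_C_mult _ _ x _ _ (Dw x Hx) (Dcomp phi d1 x Hx Hd1)).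
  - intros x Hx.
    assert (DL1 : is_derive_C L1 x (L2 x))
      by (apply is_derive_C_RtoC, is_derive_inv_mobius_den_pow; auto; lra).
    assert (DH1 : is_derive_C H1 x (H2 x))
      by (apply is_derive_C_RtoC, is_derive_inv_mobius_den_pow; auto; lra).
    pose proof (is_derive_C_plus _ _ x _ _
      (is_derive_C_mult _ _ x _ _
         (is_derive_C_mult _ _ x _ _ (is_derive_C_mult _ _ x _ _ DL1 (is_derive_C_const lam x)) (Dw x Hx))
         (Dcomp phi d1 x Hx Hd1))
      (is_derive_C_mult _ _ x _ _ (Dw x Hx) (is_derive_C_mult _ _ x _ _ DH1 (Dcomp d1 d2 x Hx Hd2)))) as T.
    match type of T with is_derive_C _ _ ?l => replace (psi2 x) with l by (unfold psi2; ring) end.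
    exact T.
  - intros x Hx. pose proof (mobius_range s x Hs Hx).
    exact (hypergeometric_eq_of_mode_eq s x lam (w x) _ _ _ Hs Hx (Hmode (h x) ltac:(auto))).
Qed.

Lemma mode_eq_smooth_sol_eq0 (alpha : R) (lam : C) (phi d1 d2 : R -> C) :
  0 < alpha <= 1 -> -1 < Re lam -> lam <> 0 -> lam <> 1 ->
  smooth_on (-1) 1 phi -> has_deriv_on (-1) 1 phi d1 -> has_deriv_on (-1) 1 d1 d2 ->
  (forall y, -1 <= y <= 1 -> mode_eq alpha lam y (phi y) (d1 y) (d2 y)) ->
  forall y, -1 <= y <= 1 -> phi y = 0.
Proof.
  intros Ha Hre Hl0 Hl1 Hsm Hd1 Hd2 Hmode.
  set (s := sqrt (1 - alpha)).
  assert (Hs : 0 <= s < 1) by exact (sqrt_one_minus_bounds alpha Ha).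
  assert (Halpha : 1 - s * s = alpha) by (unfold s; rewrite sqrt_sqrt; lra).
  assert (Hphi : forall y, -1 < y < 1 -> phi y = 0).
  { intros y Hy. destruct (mobius_surj s y Hs Hy) as [z [Hz Hzy]].
    assert (E := mode_transform_eq0 s lam phi d1 d2 Hs Hre Hl0 Hl1 Hsm Hd1 Hd2).
    specialize (E ltac:(intros; rewrite Halpha; apply Hmode; lra) z Hz).
    rewrite Hzy in E.
    replace (phi y) with (/ mode_weight s lam z * (mode_weight s lam z * phi y))%C
      by (field; apply Cexp_neq0).
    rewrite E. ring. }
  exact (has_deriv_on_eq0 (-1) 1 phi d1 ltac:(lra) Hd1 Hphi).
Qed.

Theorem proposition3p3 :
  (forall (alpha : R) (lam : C),
      (0 < alpha <= 1)%R -> (Re lam > -1)%R -> lam <> RtoC 0 -> lam <> RtoC 1 ->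
      ~ (exists psi d1 d2 : R -> C,
            smooth_on 0 1 psi /\
            has_deriv_on 0 1 psi d1 /\ has_deriv_on 0 1 d1 d2 /\
            (exists z : R, (0 <= z <= 1)%R /\ psi z <> RtoC 0) /\
            forall z : R, (0 <= z <= 1)%R ->
              (RtoC z * (RtoC 1 - RtoC z) * d2 z
               + (lam - RtoC (sqrt (1 - alpha)) - RtoC 2 * lam * RtoC z) * d1 z
               - lam * (lam - RtoC 1) * psi z)%C = RtoC 0))
  /\
  (forall (alpha : R) (lam : C),
      (0 < alpha <= 1)%R ->
      (exists phi d1 d2 : R -> C,
            smooth_on (-1) 1 phi /\
            has_deriv_on (-1) 1 phi d1 /\ has_deriv_on (-1) 1 d1 d2 /\
            (exists y : R, (-1 <= y <= 1)%R /\ phi y <> RtoC 0) /\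
            forall y : R, (-1 <= y <= 1)%R ->
              ((lam * lam + lam
                - RtoC 2 * RtoC alpha * lam / RtoC (1 + sqrt (1 - alpha) * y)) * phi y
               + (RtoC 2 * lam + RtoC 2
                  - RtoC 2 * RtoC alpha / RtoC (1 + sqrt (1 - alpha) * y)) * RtoC y * d1 y
               + (RtoC y * RtoC y - RtoC 1) * d2 y)%C = RtoC 0) ->
      (Re lam < 0)%R \/ lam = RtoC 0 \/ lam = RtoC 1).
Proof.
  split.
  - intros alpha lam Ha Hre Hl0 Hl1 [psi [d1 [d2 [[D [HD0 HD]] [Hd1 [Hd2 [[z [Hz Hnz]] Heq]]]]]]].
    apply Hnz. refine (has_deriv_on_eq0 0 1 psi d1 ltac:(lra) Hd1 _ z Hz).
    pose proof (sqrt_one_minus_bounds alpha Ha) as Hs.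
    apply (hypergeometric_Cb_sol_eq0 (sqrt (1 - alpha)) lam psi d1 d2); auto; [lra | ..].
    + intros n. rewrite <- HD0. apply has_deriv_on_chain_Cb; auto; lra.
    + intros x Hx. apply (has_deriv_on_is_derive_C 0 1); auto.
    + intros x Hx. apply (has_deriv_on_is_derive_C 0 1); auto.
    + intros x Hx. apply Heq. lra.
  - intros alpha lam Ha [phi [d1 [d2 [Hsm [Hd1 [Hd2 [[y [Hy Hnz]] Hmode]]]]]]].
    destruct (Rlt_dec (Re lam) 0) as [Hneg | Hnneg]; [left; exact Hneg | right].
    destruct (Ceq_dec lam 0) as [E0 | Hl0]; [left; exact E0 | right].
    destruct (Ceq_dec lam 1) as [E1 | Hl1]; [exact E1 | exfalso].
    apply Hnz, (mode_eq_smooth_sol_eq0 alpha lam phi d1 d2); auto. lra.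
Qed.
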